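(* Let $R$ be a finite commutative unital ring, $N\ge2$ with $N\in R^{\times}$, and $q\in R$ a root of the $N$-th cyclotomic polynomial over $\mathbb{Z}$. Let $\alpha$ be the exponent of $R^{\times}$ and $k$ the integer with $\alpha=kN$. Let $u,u'\in R^{\times}$, $a,a'\in R$. If $\mathrm{Id}_{H_N^q}(\mathcal{B}_{(u,a)})=\mathrm{Id}_{H_N^q}(\mathcal{B}_{(u',a')})$, then $(u')^k=u^k$.
   Context: $N$ divides $\alpha$ under these hypotheses. $H_N^q$ is the Taft Hopf algebra over $R$: generated by $g,x$ with $g^N=1$, $x^N=0$, $xg=qgx$, $\Delta(g)=g\otimes g$, $\Delta(x)=1\otimes x+x\otimes g$, $\varepsilon(g)=1$, $\varepsilon(x)=0$, free over $R$ with basis $\{g^mx^n:0\le m,n<N\}$. For $u\in R^{\times},a\in R$, $\mathcal{B}_{(u,a)}$ is the $R$-algebra generated by $v_g,v_x$ with $v_g^N=u$, $v_x^N=a$, $v_xv_g=qv_gv_x$, a right $H_N^q$-comodule algebra via $v_g\mapsto v_g\otimes g$, $v_x\mapsto1\otimes x+v_x\otimes g$. Let $Z_i^H$ ($i\ge1$) be copies $\{Z_i^h:h\in H_N^q\}$ of the $R$-module $H_N^q$ and $T=T(\bigoplus_iZ_i^H)$ the tensor algebra with coaction $\delta(Z_i^h)=\sum Z_i^{h_1}\otimes h_2$. $P\in T$ is a polynomial $H_N^q$-identity for a right $H_N^q$-comodule algebra $B$ if $f(P)=0$ for all right $H_N^q$-comodule algebra maps $f:T\to B$; $\mathrm{Id}_{H_N^q}(B)$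 is the set of these. *)

From HB Require Import structures.
From mathcomp Require Import all_boot all_order all_algebra.
From mathcomp Require Import fingroup finalg abelian cyclotomic.
Set Implicit Arguments. Unset Strict Implicit. Unset Printing Implicit Defensive.
Import GRing.Theory.
Local Open Scope ring_scope.

(* Free R-modules of rank N^2 with basis indexed by pairs (m,n), 0<=m,n<N.
   For H = H_N^q the basis element (m,n) is g^m x^n; for B_(u,a) it is
   v_g^m v_x^n.  Algebras are given by structure constants. *)
Section Taft.
Variables (R : comPzRingType) (N : nat) (q : R).

Definition idx := ('I_N * 'I_N)%type.
Definition vec := idx -> R.
Definition tens := (idx * idx)%type -> R.
Definition table := idx -> idx -> idx -> R. (* coeff of e_k in e_i * e_j *)

Definition mulT (I : finType) (mt : I -> I -> I -> R) (x y : I -> R) : I -> R :=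
  fun k => \sum_(i : I) \sum_(j : I) x i * y j * mt i j k.

Definition powT (I : finType) (mt : I -> I -> I -> R) (one x : I -> R) (n : nat) :=
  iter n (mulT mt x) one.

Definition bvec (m n : nat) : vec := fun k => ((k.1 == m :> nat) && (k.2 == n :> nat))%:R.

(* Taft algebra: g^m x^n * g^m' x^n' = q^(n m') g^(m+m' mod N) x^(n+n'), 0 if n+n' >= N *)
Definition mtH : table := fun i j k =>
  if (i.2 + j.2 < N)%N && (k.1 == ((i.1 + j.1) %% N)%N :> nat) && (k.2 == (i.2 + j.2)%N :> nat)
  then q ^+ (i.2 * j.1)%N else 0.

(* B_(u,a): v_g^m v_x^n * v_g^m' v_x^n' = q^(n m') v_g^(m+m') v_x^(n+n'),
   reduced with v_g^N = u, v_x^N = a *)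
Definition mtB (u a : R) : table := fun i j k =>
  if (k.1 == ((i.1 + j.1) %% N)%N :> nat) && (k.2 == ((i.2 + j.2) %% N)%N :> nat)
  then q ^+ (i.2 * j.1)%N * (if (N <= i.1 + j.1)%N then u else 1)
                        * (if (N <= i.2 + j.2)%N then a else 1)
  else 0.

Definition mtTens (mtA mtC : table) : (idx * idx)%type -> (idx * idx)%type -> (idx * idx)%type -> R :=
  fun i j k => mtA i.1 j.1 k.1 * mtC i.2 j.2 k.2.

Definition pureT (b h : vec) : tens := fun k => b k.1 * h k.2.

(* For A = B_(u,a) (resp. H), image of the basis element v_g^m v_x^n (resp. g^m x^n)
   under the algebra map rho : A -> A (x) H determined by
   v_g |-> v_g (x) g,  v_x |-> 1 (x) x + v_x (x) g
   (resp. Delta(g) = g (x) g, Delta(x) = 1 (x) x + x (x) g). *)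
Definition coactBasis (mtA : table) (i : idx) : tens :=
  let mt := mtTens mtA mtH in
  let one := pureT (bvec 0 0) (bvec 0 0) in
  let rg := pureT (bvec 1 0) (bvec 1 0) in
  let rx := fun k => pureT (bvec 0 0) (bvec 0 1) k + pureT (bvec 0 1) (bvec 1 0) k in
  mulT mt (powT mt one rg i.1) (powT mt one rx i.2).

Definition coact (mtA : table) (b : vec) : tens :=
  fun k => \sum_(i : idx) b i * coactBasis mtA i k.

(* An R-linear map phi : H -> A (given on the basis) is an H-comodule map:
   rho_A (phi h) = (phi (x) id) (Delta h) for every basis element h. *)
Definition comodule_map (mtA : table) (phi : idx -> vec) : Prop :=
  forall h : idx, forall k : idx * idx,
    coact mtA (phi h) k = \sum_(j : idx) coactBasis mtH h (j, k.2) * phi j k.1.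

(* Tensor algebra T = T(\oplus_i Z_i^H): an element is a finite R-linear
   combination of words; a letter (i, h) stands for Z_i^h with h a basis
   element g^m x^n of H (Z_i^H is free on these). *)
Definition Tpoly := seq (R * seq (nat * idx)).

(* algebra map T -> A determined by the linear maps Z_i^H -> A *)
Definition evalT (mtA : table) (phi : nat -> idx -> vec) (P : Tpoly) : vec :=
  fun k => \sum_(c <- P) c.1 *
    foldr (fun l acc => mulT mtA (phi l.1 l.2) acc) (bvec 0 0) c.2 k.

(* Polynomial H-identities: P vanishes under every comodule algebra map T -> A,
   i.e. under every family of comodule maps Z_i^H -> A. *)
Definition IdH (mtA : table) (P : Tpoly) : Prop :=
  forall phi : nat -> idx -> vec, (forall i, comodule_map mtA (phi i)) ->
    forall k, evalT mtA phi P k = 0.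

End Taft.

(* A comodule map [phi : H -> B_(u,a)] sends [g] to [r v_g] for a scalar [r]: the terms of
   [rho (phi g)] without [v_x] are read off from those of the [rho (v_g^i v_x^j)], and must match
   [phi g (x) g].  Hence [phi (Z^m) = r^m u^(m / N) v_g^(m mod N)] for [Z = Z_1^g].
   In a finite ring there is [M] with [r^(M + alpha) = r^M] for every [r]: [e = r^M] is
   idempotent for [M] large, and [r e + (1 - e)] is a unit, so its [alpha]-th power is [1].
   Therefore [Z^(M + kN) - u^k Z^M] is an identity of [B_(u,a)], while the comodule map
   [g^i x^j |-> v_g^i v_x^j] evaluates it on [B_(u',a')] to a unit multiple of [u'^k - u^k].
   Neither [q] nor the invertibility of [N] or of [u] plays a role. *)

From HB Require Import structures.
From mathcomp Require Import all_boot all_order all_algebra.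
From mathcomp Require Import fingroup finalg abelian cyclotomic.
From mathcomp Require Import ring zify.
From Stdlib Require Import FunctionalExtensionality.
Import GRing.Theory.
Local Open Scope ring_scope.

Lemma expr_eventually_periodic {R : finPzSemiRingType} (r : R) :
  exists i p, [/\ (0 < p <= #|R|)%N, (i < #|R|)%N & r ^+ (i + p) = r ^+ i].
Proof.
have /injectivePn[x [y x_neq_y rx_ry]] : ~~ injectiveb (fun t : 'I_#|R|.+1 => r ^+ t).
  by apply/injectiveP => /leq_card; rewrite card_ord ltnn.
have lt_x := ltn_ord x; have lt_y := ltn_ord y.
case: (ltngtP x y) => [xy|yx|/val_inj xy]; last by rewrite xy eqxx in x_neq_y.
- exists x, (y - x)%N; split; [lia | lia | by rewrite subnKC 1?ltnW].
- exists y, (x - y)%N; split; [lia | lia | by rewrite subnKC 1?ltnW].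
Qed.

Lemma expr_period_mul {R : pzSemiRingType} {r : R} {i p m} c :
  r ^+ (i + p) = r ^+ i -> (i <= m)%N -> r ^+ (m + c * p) = r ^+ m.
Proof.
move=> per i_le_m.
have shift j : (i <= j)%N -> r ^+ (j + p) = r ^+ j.
  by move=> i_le_j; rewrite -(subnK i_le_j) -addnA exprD per -exprD.
elim: c => [|c IH]; first by rewrite addn0.
by rewrite mulSn addnCA addnC shift ?IH // (leq_trans i_le_m) ?leq_addr.
Qed.

Lemma expr_fact_idem {R : finPzSemiRingType} (r : R) :
  r ^+ #|R|`! * r ^+ #|R|`! = r ^+ #|R|`!.
Proof.
have [i [p [p_bnd i_lt per]]] := expr_eventually_periodic r.
have i_le : (i <= #|R|`!)%N by apply: leq_trans (ltnW i_lt) (fact_geq _).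
by rewrite -exprD -{2}(divnK (dvdn_fact p_bnd)) (expr_period_mul _ per).
Qed.

Lemma idem_shift_expr {R : comPzRingType} (e r : R) j :
  e * e = e -> (r * e + (1 - e)) ^+ j = r ^+ j * e + (1 - e).
Proof.
move=> idem; elim: j => [|j IH]; first by rewrite !expr0 mul1r addrC subrK.
rewrite exprSr IH exprSr; apply/eqP; rewrite -subr_eq0; apply/eqP.
by transitivity ((e * e - e) * (r ^+ j * r - r ^+ j - r + 1)); [ring | rewrite idem subrr mul0r].
Qed.

Lemma idem_shift_unit {R : comUnitRingType} {e r s : R} :
  e * e = e -> r * s = e -> r * e + (1 - e) \is a GRing.unit.
Proof.
move=> idem rs; apply/unitrP; exists (s * e + (1 - e)).
suff inv : (r * e + (1 - e)) * (s * e + (1 - e)) = 1 by rewrite mulrC inv.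
transitivity (r * s * (e * e) + (e - e * e) * (r + s) + 1 - (e + e - e * e)); first ring.
by rewrite rs !idem; ring.
Qed.

Lemma unitr_expr_exponent {R : finUnitRingType} {w : R} :
  w \is a GRing.unit -> w ^+ exponent [set: {unit R}] = 1.
Proof.
move=> w_unit; have := expg_exponent (in_setT (FinRing.Unit w_unit)).
by move/(congr1 val); rewrite FinRing.val_unitX.
Qed.

Lemma expr_exponent_eventually (R : finComUnitRingType) :
  exists M, forall r : R, r ^+ (M + exponent [set: {unit R}]) = r ^+ M.
Proof.
exists #|R|`! => r; set n := #|R|`!; set e := r ^+ n.
have idem : e * e = e := expr_fact_idem r.
have r_e : r * r ^+ n.-1 = e by rewrite -exprS prednK ?fact_gt0.
have := unitr_expr_exponent (idem_shift_unit idem r_e).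
rewrite idem_shift_expr // => /(congr1 (fun x => x - (1 - e))).
by rewrite addrK subKr exprD mulrC.
Qed.

Lemma leq_succ_modn_dvdn d m : (0 < d)%N -> (d <= (m %% d).+1)%N = (d %| m.+1)%N.
Proof.
move=> d_gt0; have := modnS m d; case: ifP => [d_dvd _ | _ <-]; last by rewrite leqNgt ltn_pmod.
by apply: dvdn_leq => //; rewrite /dvdn -addn1 modnDml addn1.
Qed.

Section TaftCoaction.
Variables (R : comPzRingType) (n : nat) (q : R).
Local Notation N := n.+2.
Local Notation idx := (idx N).
Local Notation tens := (tens R N).
Local Notation TH := (mtTens (mtH q) (mtH q)).
Local Notation TB u a := (mtTens (mtB q u a) (mtH q)).
Local Notation bv := (@bvec R N).
Local Notation one := (pureT (bv 0 0) (bv 0 0)).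
Local Notation rg := (pureT (bv 1 0) (bv 1 0)).
Local Notation rx := (fun k => pureT (bv 0 0) (bv 0 1) k + pureT (bv 0 1) (bv 1 0) k).

Definition gidx : idx := (inord 1, inord 0).

Lemma bvecE m1 m2 (d : idx) : (m1 < N)%N -> (m2 < N)%N ->
  bv m1 m2 d = (d == (inord m1, inord m2))%:R.
Proof. by case: d => d1 d2 h1 h2; rewrite /bvec xpair_eqE -!val_eqE /= !inordK. Qed.

Lemma sum_delta (T : finType) (i0 : T) (F : T -> R) :
  \sum_i (i == i0)%:R * F i = F i0.
Proof.
rewrite (bigD1 i0) //= eqxx mul1r big1 ?addr0 // => i /negbTE ->.
exact: mul0r.
Qed.

Lemma sum_bvec m1 m2 (F : idx -> R) : (m1 < N)%N -> (m2 < N)%N ->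
  \sum_d bv m1 m2 d * F d = F (inord m1, inord m2).
Proof. by move=> h1 h2; rewrite -sum_delta; apply: eq_bigr => d _; rewrite bvecE. Qed.

Definition deg_le (t : tens) (m1 n1 : nat) :=
  forall k : idx * idx, ((m1 < k.1.1) || (n1 < k.1.2))%N -> t k = 0.

Lemma deg_le_pure m1 n1 h : deg_le (pureT (bv m1 n1) h) m1 n1.
Proof.
move=> k hk; rewrite /pureT /bvec.
by case/orP: hk => h'; rewrite ?(gtn_eqF h') ?andbF mul0r.
Qed.

Lemma deg_le_add t1 t2 m1 n1 : deg_le t1 m1 n1 -> deg_le t2 m1 n1 ->
  deg_le (fun k => t1 k + t2 k) m1 n1.
Proof. by move=> s1 s2 k hk; rewrite s1 // s2 // addr0. Qed.

Lemma deg_le_mono t m1 n1 m2 n2 : deg_le t m1 n1 -> (m1 <= m2)%N -> (n1 <= n2)%N ->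
  deg_le t m2 n2.
Proof.
move=> st h1 h2 k hk; apply: st; case/orP: hk => h.
  by rewrite (leq_ltn_trans h1 h).
by rewrite (leq_ltn_trans h2 h) orbT.
Qed.

Lemma mulT_eq_deg_le (mt mt' : idx * idx -> idx * idx -> idx * idx -> R)
    {x y m1 n1 m2 n2 k} : deg_le x m1 n1 -> deg_le y m2 n2 ->
  (forall i j : idx * idx, (i.1.1 <= m1)%N -> (i.1.2 <= n1)%N ->
     (j.1.1 <= m2)%N -> (j.1.2 <= n2)%N -> mt i j k = mt' i j k) ->
  mulT mt x y k = mulT mt' x y k.
Proof.
move=> dx dy e; apply: eq_bigr => i _; apply: eq_bigr => j _.
case: (boolP ((m1 < i.1.1) || (n1 < i.1.2))%N) => [/dx->|hi]; first by rewrite !mul0r.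
case: (boolP ((m2 < j.1.1) || (n2 < j.1.2))%N) => [/dy->|hj]; first by rewrite !mulr0 !mul0r.
move: hi hj; rewrite !negb_or -!leqNgt => /andP[h1 h2] /andP[h3 h4].
by rewrite e.
Qed.

Lemma mulT_deg_le {x y m1 n1 m2 n2} : deg_le x m1 n1 -> deg_le y m2 n2 ->
  (m1 + m2 < N)%N -> deg_le (mulT TH x y) (m1 + m2) (n1 + n2).
Proof.
move=> dx dy hm k hk; rewrite (mulT_eq_deg_le _ (fun _ _ _ => 0) dx dy).
  by rewrite /mulT big1 // => i _; rewrite big1 // => j _; rewrite mulr0.
move=> i j h1 h2 h3 h4; rewrite /mtTens /mtH.
case: ifP => [/andP[/andP[_ /eqP e1] /eqP e2]|_]; last by rewrite mul0r.
have l1 := leq_add h1 h3; have l2 := leq_add h2 h4.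
have e1' : (nat_of_ord k.1.1 = i.1.1 + j.1.1)%N by rewrite e1 modn_small // (leq_ltn_trans l1 hm).
by move: hk; rewrite e1' e2 !ltnNge l1 l2.
Qed.

Lemma mtB_small u a (i j k : idx) : (i.1 + j.1 < N)%N -> (i.2 + j.2 < N)%N ->
  mtB q u a i j k = mtH q i j k.
Proof.
move=> h1 h2; rewrite /mtB /mtH h2 (modn_small h1) (modn_small h2).
by rewrite leqNgt h1 leqNgt h2 !mulr1.
Qed.

Lemma mulT_TB u a {x y m1 n1 m2 n2} : deg_le x m1 n1 -> deg_le y m2 n2 ->
  (m1 + m2 < N)%N -> (n1 + n2 < N)%N -> mulT (TB u a) x y = mulT TH x y.
Proof.
move=> dx dy hm hn; apply: functional_extensionality => k.
apply: (mulT_eq_deg_le _ _ dx dy) => i j h1 h2 h3 h4; rewrite /mtTens mtB_small //.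
  exact: leq_ltn_trans (leq_add h1 h3) hm.
exact: leq_ltn_trans (leq_add h2 h4) hn.
Qed.

Lemma powT_deg_le {x m1 n1} m : deg_le x m1 n1 -> (m * m1 < N)%N ->
  deg_le (powT TH one x m) (m * m1) (m * n1).
Proof.
move=> dx; elim: m => [|m IH] hm; first by rewrite !mul0n; apply: deg_le_pure.
have hm' : (m * m1 < N)%N by apply: leq_ltn_trans hm; rewrite leq_mul2r leqnSn orbT.
by rewrite !mulSn; exact: mulT_deg_le dx (IH hm') _.
Qed.

Lemma powT_TB u a {x m1 n1} m : deg_le x m1 n1 -> (m * m1 < N)%N -> (m * n1 < N)%N ->
  powT (TB u a) one x m = powT TH one x m.
Proof.
move=> dx; elim: m => [//|m IH] hm hn.
have hm' : (m * m1 < N)%N by apply: leq_ltn_trans hm; rewrite leq_mul2r leqnSn orbT.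
have hn' : (m * n1 < N)%N by apply: leq_ltn_trans hn; rewrite leq_mul2r leqnSn orbT.
rewrite /powT /= -/(powT _ _ _ m) IH //.
by apply: (mulT_TB _ _ dx (powT_deg_le m dx hm')); rewrite -mulSn.
Qed.

Lemma deg_le_rx : deg_le rx 0 1.
Proof.
apply: deg_le_add; last exact: deg_le_pure.
exact: deg_le_mono (deg_le_pure 0 0 _) _ _.
Qed.

Lemma powT_rg_deg_le m : (m < N)%N -> deg_le (powT TH one rg m) m 0.
Proof.
by move=> hm; have := powT_deg_le m (deg_le_pure 1 0 (bv 1 0)); rewrite muln1 muln0; apply.
Qed.

Lemma powT_rx_deg_le m : deg_le (powT TH one rx m) 0 m.
Proof. by have := powT_deg_le m deg_le_rx; rewrite muln1 muln0; apply. Qed.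

Lemma coactBasis_deg_le (i : idx) : deg_le (coactBasis q (mtH q) i) i.1 i.2.
Proof.
rewrite -[X in deg_le _ X](addn0 i.1) -[X in deg_le _ _ X]add0n.
by apply: mulT_deg_le (powT_rg_deg_le _ _) (powT_rx_deg_le _) _; rewrite ?addn0.
Qed.

Lemma coactBasis_mtB u a (i : idx) : coactBasis q (mtB q u a) i = coactBasis q (mtH q) i.
Proof.
rewrite /coactBasis (powT_TB _ _ _ (deg_le_pure 1 0 (bv 1 0))) ?muln1 ?muln0 //.
rewrite (powT_TB _ _ _ deg_le_rx) ?muln1 ?muln0 //.
by apply: (mulT_TB _ _ (powT_rg_deg_le _ _) (powT_rx_deg_le _)); rewrite ?addn0 ?add0n.
Qed.

Definition vx0_part (z : tens) (a p1 p2 : nat) :=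
  forall c j : idx, c.2 = 0%N :> nat -> z (c, j) = (c.1 == a :> nat)%:R * bv p1 p2 j.

Definition tidx (a p1 p2 : nat) : idx * idx := ((inord a, ord0), (inord p1, inord p2)).

Lemma tidx_vx0 (i : idx * idx) a p1 p2 : i == tidx a p1 p2 -> i.1.2 == 0%N :> nat.
Proof. by move/eqP->. Qed.

Lemma vx0_partE {z a p1 p2} : (a < N)%N -> (p1 < N)%N -> (p2 < N)%N -> vx0_part z a p1 p2 ->
  forall i : idx * idx, i.1.2 = 0%N :> nat -> z i = (i == tidx a p1 p2)%:R.
Proof.
move=> ha h1 h2 hz [[c1 c2] j] /= c2_0.
rewrite hz // bvecE // -natrM mulnb /tidx !xpair_eqE.
have -> : (c2 == ord0) = true by rewrite -val_eqE /= c2_0.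
by rewrite -(inj_eq val_inj) /= inordK // andbT.
Qed.

Lemma mtH_vx0 (d d' c : idx) : c.2 = 0%N :> nat ->
  mtH q d d' c = [&& d.2 == 0%N :> nat, d'.2 == 0%N :> nat & c.1 == ((d.1 + d'.1) %% N)%N :> nat]%:R.
Proof.
move=> c2_0; rewrite /mtH c2_0 (eq_sym 0%N) addn_eq0.
case: d => [d1 [[|x] hx]]; case: d' => [d1' [[|y] hy]] //=; rewrite ?andbF //.
by rewrite mul0n expr0; case: (_ == _).
Qed.

Lemma mtH_bvec p1 p2 s1 s2 (j : idx) : (p1 < N)%N -> (p2 < N)%N -> (s1 < N)%N ->
  (s2 < N)%N -> (p2 + s2 < N)%N ->
  mtH q (inord p1, inord p2) (inord s1, inord s2) j
  = q ^+ (p2 * s1)%N * bv ((p1 + s1) %% N)%N (p2 + s2)%N j.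
Proof.
move=> h1 h2 h3 h4 h5; rewrite /mtH /bvec /= !inordK // h5 /=.
by case: (_ && _); rewrite ?mulr1 ?mulr0.
Qed.

Lemma vx0_part_mul x y a b p1 p2 s1 s2 :
  (a < N)%N -> (b < N)%N -> (p1 < N)%N -> (p2 < N)%N -> (s1 < N)%N -> (s2 < N)%N ->
  (p2 + s2 < N)%N -> (p2 * s1 = 0)%N ->
  vx0_part x a p1 p2 -> vx0_part y b s1 s2 ->
  vx0_part (mulT TH x y) ((a + b) %% N)%N ((p1 + s1) %% N)%N (p2 + s2)%N.
Proof.
move=> ha hb h1 h2 h3 h4 h5 h6 fx fy c j c0.
have term i i' : x i * y i' * TH i i' (c, j) = (i == tidx a p1 p2)%:R *
   ((i' == tidx b s1 s2)%:R * ((c.1 == ((a + b) %% N)%N :> nat)%:R * bv ((p1 + s1) %% N)%N (p2 + s2)%N j)).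
  rewrite /mtTens /= (mtH_vx0 _ _ _ c0).
  have [i0 | i_ne] := eqVneq (i.1.2 : nat) 0%N; last first.
    by rewrite (contraNF (@tidx_vx0 i a p1 p2) i_ne) /= !(mul0r, mulr0).
  have [i'0 | i'_ne] := eqVneq (i'.1.2 : nat) 0%N; last first.
    by rewrite (contraNF (@tidx_vx0 i' b s1 s2) i'_ne) andbF /= !(mul0r, mulr0).
  rewrite (vx0_partE ha h1 h2 fx) // (vx0_partE hb h3 h4 fy) //.
  case: eqVneq => [->|_]; last by rewrite !mul0r.
  case: eqVneq => [->|_]; last by rewrite !(mul0r, mulr0).
  by rewrite !mul1r /tidx /= !inordK // mtH_bvec // h6 expr0 mul1r.
rewrite /mulT.
under eq_bigr => i _ do under eq_bigr => i' _ do rewrite term.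
under eq_bigr => i _ do rewrite -mulr_sumr.
by rewrite !sum_delta.
Qed.

Lemma vx0_part_pure a p1 p2 : vx0_part (pureT (bv a 0) (bv p1 p2)) a p1 p2.
Proof. by move=> c j c0; rewrite /pureT /bvec /= c0 andbT. Qed.

Lemma vx0_part_rx : vx0_part rx 0 0 1.
Proof. by move=> c j c0; rewrite /pureT /bvec /= c0 andbT andbF mul0r addr0. Qed.

Lemma vx0_part_powg m : (m < N)%N -> vx0_part (powT TH one rg m) m m 0.
Proof.
elim: m => [|m IH] hm; first exact: vx0_part_pure.
have hm' : (m < N)%N by apply: ltnW.
have := @vx0_part_mul rg _ 1 m 1 0 m 0 isT hm' isT isT hm' isT isT
  (mul0n _) (vx0_part_pure _ _ _) (IH hm').
by rewrite add1n add0n modn_small.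
Qed.

Lemma vx0_part_powx m : (m < N)%N -> vx0_part (powT TH one rx m) 0 0 m.
Proof.
elim: m => [|m IH] hm; first exact: vx0_part_pure.
have hm' : (m < N)%N by apply: ltnW.
have := @vx0_part_mul rx _ 0 0 0 1 0 m isT isT isT isT isT hm' hm
  (muln0 _) vx0_part_rx (IH hm').
by rewrite add0n add1n mod0n.
Qed.

Lemma vx0_part_coactBasis (i : idx) : vx0_part (coactBasis q (mtH q) i) i.1 i.1 i.2.
Proof.
have := @vx0_part_mul _ _ i.1 0 i.1 0 0 i.2 (ltn_ord _) isT (ltn_ord _) isT isT
  (ltn_ord _) (ltn_ord _) (mul0n _) (vx0_part_powg _ (ltn_ord i.1)) (vx0_part_powx _ (ltn_ord i.2)).
by rewrite !addn0 add0n modn_small.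
Qed.

(* [Delta g = g (x) g] has no [x] in its first factor, so [vx0_part] determines it. *)
Lemma coactBasis_gidx (c j : idx) :
  coactBasis q (mtH q) gidx (c, j) = (c == gidx)%:R * (j == gidx)%:R.
Proof.
have [c2_0|c2_ne] := eqVneq (c.2 : nat) 0%N.
  rewrite vx0_part_coactBasis //= bvecE // !inordK // /gidx.
  by case: c c2_0 => c1 c2 /= c2_0; rewrite xpair_eqE -!val_eqE /= !inordK // c2_0 andbT.
rewrite coactBasis_deg_le /=; last by rewrite !inordK // lt0n c2_ne orbT.
by case: c c2_ne => c1 c2 /= c2_ne; rewrite xpair_eqE -!val_eqE /= !inordK // (negbTE c2_ne) andbF mul0r.
Qed.

Lemma comodule_map_gidx u a (phi : idx -> vec R N) :
  comodule_map q (mtB q u a) phi -> forall i, phi gidx i = phi gidx gidx * bv 1 0 i.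
Proof.
move=> hphi i; rewrite bvecE //; have [->|i_ne] := eqVneq i gidx; first by rewrite mulr1.
have := hphi gidx ((i.1, ord0), i); rewrite /coact.
have coact_i d : phi gidx d * coactBasis q (mtB q u a) d ((i.1, ord0), i) = (d == i)%:R * phi gidx d.
  case: d => d1 d2; rewrite coactBasis_mtB vx0_part_coactBasis // bvecE // !inord_val /=.
  by have [->|_] := eqVneq i (d1, d2); rewrite /= ?eqxx !(mulr1, mul1r, mulr0, mul0r).
under eq_bigr => d _ do rewrite coact_i.
rewrite sum_delta => ->; rewrite mulr0; apply: big1 => j _.
by rewrite coactBasis_gidx (negbTE i_ne) mulr0 mul0r.
Qed.

Lemma comodule_map_bvec u a : comodule_map q (mtB q u a) (fun h : idx => bv h.1 h.2).
Proof.
move=> h [k1 k2]; rewrite /coact sum_bvec // !inord_val -surjective_pairing /=.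
under eq_bigr => j _ do rewrite bvecE // !inord_val -surjective_pairing mulrC eq_sym.
by rewrite sum_delta coactBasis_mtB.
Qed.

Lemma iter_mulT_vg u a {X : vec R N} {r} : (forall i, X i = r * bv 1 0 i) -> forall m,
  iter m (mulT (mtB q u a) X) (bv 0 0) = (fun k => r ^+ m * u ^+ (m %/ N) * bv (m %% N) 0 k).
Proof.
move=> hX; elim=> [|m IH].
  by apply: functional_extensionality => k; rewrite div0n mod0n !expr0 !mul1r.
rewrite [iter _ _ _]/= IH; apply: functional_extensionality => k; rewrite /mulT.
set C := r ^+ m * u ^+ (m %/ N).
have e i j : X i * (C * bv (m %% N) 0 j) * mtB q u a i j k =
   bv 1 0 i * (bv (m %% N) 0 j * (r * C * mtB q u a i j k)).
  by rewrite hX; ring.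
under eq_bigr => i _ do under eq_bigr => j _ do rewrite e.
under eq_bigr => i _ do rewrite -mulr_sumr.
rewrite sum_bvec // sum_bvec ?ltn_pmod //.
rewrite /mtB /= !inordK ?ltn_pmod // add0n mod0n mul0n expr0 mul1r mulr1.
rewrite modnDmr add1n leq_succ_modn_dvdn // /bvec divnS // /C.
case: (_ && _); last by rewrite /= !mulr0.
by case: (N %| m.+1)%N; rewrite /= ?add1n ?add0n ?exprS ?mulr1; ring.
Qed.

End TaftCoaction.

Lemma foldr_nseq (A B : Type) (f : A -> B -> B) z m x : foldr f z (nseq m x) = iter m (f x) z.
Proof. by elim: m => //= m ->. Qed.

Definition Zg_poly {R : comPzRingType} n (M d : nat) (c : R) : Tpoly R n.+2 :=
  [:: (1, nseq (M + d) (1%N, gidx n)); (- c, nseq M (1%N, gidx n))].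

Lemma evalT_Zg_poly {R : comPzRingType} {n} {q u a : R} {phi r M d c} :
  (forall i, phi 1%N (gidx n) i = r * bvec R 1 0 i) -> forall k,
  evalT (mtB q u a) phi (Zg_poly n M (d * n.+2) c) k =
  u ^+ (M %/ n.+2) * bvec R (M %% n.+2) 0 k * (r ^+ (M + d * n.+2) * u ^+ d - c * r ^+ M).
Proof.
move=> phi_g k; rewrite /evalT !big_cons big_nil /= !foldr_nseq !(iter_mulT_vg _ _ _ _ _ phi_g).
by rewrite (addnC M) divnMDl // modnMDl addnC !exprD; ring.
Qed.

Lemma Zg_poly_IdH {R : finComUnitRingType} {n} {q u a : R} {M d} :
  (forall r : R, r ^+ (M + d * n.+2) = r ^+ M) ->
  IdH q (mtB q u a) (Zg_poly n M (d * n.+2) (u ^+ d)).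
Proof.
move=> periodic phi comod k.
move/comodule_map_gidx: (comod 1%N) => phi_g.
by rewrite (evalT_Zg_poly phi_g) periodic [_ * u ^+ d]mulrC subrr mulr0.
Qed.

Lemma IdH_Zg_poly_coef {R : comUnitRingType} {n} {q u a c : R} {M d} :
  u \is a GRing.unit -> IdH q (mtB q u a) (Zg_poly n M (d * n.+2) c) -> u ^+ d = c.
Proof.
move=> u_unit /(_ (fun _ h => bvec R h.1 h.2) (fun _ => comodule_map_bvec _ _ q u a)).
have id_g (i : idx n.+2) : bvec R (gidx n).1 (gidx n).2 i = 1 * bvec R 1 0 i by rewrite mul1r /= !inordK.
move=> /(_ (inord (M %% n.+2), inord 0)); rewrite (evalT_Zg_poly id_g).
rewrite bvecE ?ltn_pmod // eqxx mulr1 !expr1n mulr1 mul1r -(mulr0 (u ^+ (M %/ n.+2))).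
by move/(mulrI (unitrX _ u_unit))/eqP; rewrite subr_eq0 => /eqP.
Qed.

Theorem proposition3p6 (R : finComUnitRingType) (N : nat) (q : R) (k : nat)
    (u u' a a' : R) :
  (2 <= N)%N ->
  (N%:R : R) \is a GRing.unit ->
  root (map_poly intr 'Phi_N) q ->
  exponent [set: {unit R}] = (k * N)%N ->
  u \is a GRing.unit -> u' \is a GRing.unit ->
  (forall P : Tpoly R N, @IdH R N q (@mtB R N q u a) P <-> @IdH R N q (@mtB R N q u' a') P) ->
  u' ^+ k = u ^+ k.
Proof.
move=> N_ge2 _ _ exp_units _ u'_unit same_ids.
have [M periodic] := expr_exponent_eventually R.
case: N N_ge2 exp_units same_ids => [|[|n]] // _ exp_units same_ids.
rewrite exp_units in periodic.
apply: (IdH_Zg_poly_coef (q := q) (a := a') (M := M) u'_unit); apply/same_ids.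
exact: Zg_poly_IdH periodic.
Qed.
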